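(* Let $\nu\in\mathbb{C}$. The initial equation admits a unique formal fundamental matrix at the origin of the form $\hat\Phi(x,0)=\hat H(x)\,x^{\Lambda}\exp(-Q/x)$ with $Q=\mathrm{diag}(1,2,0)$, $\Lambda=\mathrm{diag}(0,\nu-2,\nu-4)$ and $$\hat H(x)=\begin{pmatrix}1&x^2\hat\varphi(x)&\frac{x^4\hat\psi(x)}2\\0&1&-\frac{x^2}2\\0&0&1\end{pmatrix},$$ where: (1) if $\nu$ is a non-positive integer, $\hat\psi(x)=1+\nu x+\nu(\nu+1)x^2+\dots+(-1)^\nu(-\nu)!\,x^{-\nu}$ and $\hat\varphi(x)=1-\nu x+\nu(\nu+1)x^2-\dots+(-\nu)!\,x^{-\nu}$ are polynomials (hence analytic at the origin); (2) otherwise $\hat\psi(x)=\sum_{n\ge0}(\nu)^{(n)}x^n$ and $\hat\varphi(x)=\sum_{n\ge0}(-1)^n(\nu)^{(n)}x^n$ are divergent series.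
   Context: $\partial=d/dx$; the initial equation is $L_3L_2L_1y=0$ with $L_1=\partial-\frac1{x^2}$, $L_2=\partial-\frac{\nu-2}{x}-\frac2{x^2}$, $L_3=\partial-\frac{\nu-4}x$. A (formal) fundamental matrix of the equation means one of the system $Y'=A(x)Y$ with $A(x)=\begin{pmatrix}1/x^2&1&0\\0&\frac{\nu-2}x+\frac2{x^2}&1\\0&0&\frac{\nu-4}x\end{pmatrix}$ (equivalently $Y=(y,L_1y,L_2L_1y)^T$). $(\nu)^{(n)}=\nu(\nu+1)\cdots(\nu+n-1)$, $(\nu)^{(0)}=1$. *)

From HB Require Import structures.
From mathcomp Require Import all_boot all_order all_algebra.
From mathcomp Require Import complex.
From mathcomp Require Import reals.
Set Implicit Arguments. Unset Strict Implicit. Unset Printing Implicit Defensive.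
Import Order.TTheory GRing.Theory Num.Theory.
Local Open Scope ring_scope.

Section FPS.
Variable C : comNzRingType.

Definition fps := nat -> C.

Definition fmul (f g : fps) : fps := fun n => \sum_(i < n.+1) f i * g (n - i)%N.
Definition fX (f : fps) : fps := fun n => if n is n'.+1 then f n' else 0.
Definition fderiv (f : fps) : fps := fun n => f n.+1 *+ n.+1.
Definition fconst (c : C) : fps := fun n => if n == 0%N then c else 0.

Definition fmx := 'I_3 -> 'I_3 -> fps.

(* [is_formal_fund B lam q H] : with B = x^2 A (polynomial entries), the
   formal matrix  Phi = H(x) x^Lambda exp(-Q/x),  Lambda = diag lam,
   Q = diag q, is a formal solution of  Phi' = A Phi.  Since
   Phi' = (H' + H (Lambda/x + Q/x^2)) x^Lambda exp(-Q/x), this is the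
   formal identity  x^2 H' = (x^2 A) H - H (x Lambda + Q)  (entrywise,
   coefficientwise). *)
Definition is_formal_fund (B : fmx) (lam q : 'I_3 -> C) (H : fmx) : Prop :=
  forall (i j : 'I_3) (n : nat),
    fX (fX (fderiv (H i j))) n
    = \sum_(k < 3) fmul (B i k) (H k j) n
      - (lam j * fX (H i j) n + q j * H i j n).

End FPS.

Section Problem.
Variable R : realType.
Local Notation C := (R[i]).

Definition x2A (nu : C) : fmx C := fun i j =>
  match nat_of_ord i, nat_of_ord j with
  | 0, 0 => fconst 1
  | 0, 1 => fX (fX (fconst 1))
  | 1, 1 => fun n => if n == 0%N then 2 else if n == 1%N then nu - 2 else 0
  | 1, 2 => fX (fX (fconst 1))
  | 2, 2 => fun n => if n == 1%N then nu - 4 else 0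
  | _, _ => fun _ => 0
  end.

Definition Lambda (nu : C) : 'I_3 -> C := fun j =>
  match nat_of_ord j with 0 => 0 | 1 => nu - 2 | _ => nu - 4 end.

Definition Qd : 'I_3 -> C := fun j =>
  match nat_of_ord j with 0 => 1 | 1 => 2 | _ => 0 end.

Definition Hmat (phi psi : fps C) : fmx C := fun i j =>
  match nat_of_ord i, nat_of_ord j with
  | 0, 0 | 1, 1 | 2, 2 => fconst 1
  | 0, 1 => fX (fX phi)
  | 0, 2 => fun n => (fX (fX (fX (fX psi))) n) / 2
  | 1, 2 => fun n => if n == 2%N then - (1 / 2) else 0
  | _, _ => fun _ => 0
  end.

Definition rising (nu : C) (n : nat) : C := \prod_(i < n) (nu + i%:R).

Definition divergent (f : fps C) : Prop :=
  forall z : C, z != 0 -> ~ (exists M : C, forall n, `|f n * z ^+ n| <= M).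

End Problem.

From HB Require Import structures.
From mathcomp Require Import all_boot all_order all_algebra.
From mathcomp Require Import complex.
From mathcomp Require Import reals.
From mathcomp Require Import ring zify.

(* Entrywise, x^2 H' = (x^2 A) H - H (x Lambda + Q) is an identity except in
   the entries (0,1) and (0,2), which are first-order recurrences for the
   coefficients of phi and psi: phi_0 = psi_0 = 1, phi_(n+1) = -(nu + n) phi_n,
   psi_(n+1) = (nu + n) psi_n.  So phi and psi are (signed) rising factorials,
   which vanish past degree m when nu = -m.  Otherwise the ratio of consecutive
   terms of sum (nu)^(n) z^n is (nu + n) z, eventually of modulus >= 2, so the
   terms are unbounded for every z <> 0. *)

Import Order.TTheory GRing.Theory Num.Theory.
Set Implicit Arguments. Unset Strict Implicit. Unset Printing Implicit Defensive.
Local Open Scope ring_scope.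

Lemma big_ord3 (V : nmodType) (F : 'I_3 -> V) :
  \sum_(k < 3) F k = F (@Ordinal 3 0 isT) + F (@Ordinal 3 1 isT) + F (@Ordinal 3 2 isT).
Proof.
rewrite !big_ord_recl big_ord0 addr0 addrA.
by congr (F _ + F _ + F _); apply: val_inj.
Qed.

Section FormalSeries.
Variable C : comNzRingType.
Implicit Types (f g c : fps C) (a : C).

Lemma fmul_fconstl a g n : fmul (fconst a) g n = a * g n.
Proof.
rewrite /fmul big_ord_recl subn0 big1 ?addr0 // => i _.
by rewrite /fconst /= mul0r.
Qed.

Lemma fmul0l g n : fmul (fun _ => 0) g n = 0.
Proof. by rewrite /fmul big1 // => i _; rewrite mul0r. Qed.

Lemma fmulXl f g n : fmul (fX f) g n = fX (fmul f g) n.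
Proof. by case: n => [|n]; rewrite /fmul big_ord_recl /= mul0r add0r ?big_ord0. Qed.

Lemma eq_fmull f f' g n : f =1 f' -> fmul f g n = fmul f' g n.
Proof. by move=> ff'; apply: eq_bigr => i _; rewrite ff'. Qed.

Lemma fmulX2l g n : fmul (fX (fX (fconst 1))) g n = fX (fX g) n.
Proof.
rewrite fmulXl; case: n => [|n] //=; rewrite fmulXl.
by case: n => [|n] //=; rewrite fmul_fconstl mul1r.
Qed.

Lemma fmul_affinel a b g n :
  fmul (fun k => if k == 0%N then a else if k == 1%N then b else 0) g n
  = a * g n + b * fX g n.
Proof.
rewrite /fmul big_ord_recl subn0 /=; case: n => [|n]; first by rewrite big_ord0 mulr0.
rewrite big_ord_recl big1 => [|i _]; last by rewrite mul0r.
by rewrite /bump /= subSS subn0 addr0.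
Qed.

Lemma fX_eq0 f : (forall n, fX f n = 0) -> forall n, f n = 0.
Proof. by move=> f0 n; apply: (f0 n.+1). Qed.

Definition fps_rec_defect c f : fps C :=
  fun n => f n - (fconst 1 n + c n * fX f n).

Lemma fps_rec_defect_eq0P c f :
  (forall n, fps_rec_defect c f n = 0) <-> (forall n, f n = \prod_(i < n) c i.+1).
Proof.
have defE n : (fps_rec_defect c f n == 0) = (f n == fconst 1 n + c n * fX f n).
  by rewrite subr_eq0.
split=> hf n.
  elim: n => [|n IHn].
    by move/eqP: (hf 0%N); rewrite defE => /eqP->; rewrite big_ord0 mulr0 addr0.
  by move/eqP: (hf n.+1); rewrite defE => /eqP->; rewrite /= IHn add0r big_ord_recr mulrC.
apply/eqP; rewrite defE hf; case: n => [|n]; first by rewrite big_ord0 mulr0 addr0.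
by rewrite /= hf add0r big_ord_recr mulrC.
Qed.

Definition fund_defect (B : fmx C) (lam q : 'I_3 -> C) (H : fmx C) (i j : 'I_3) : fps C :=
  fun n => fX (fX (fderiv (H i j))) n
           - (\sum_(k < 3) fmul (B i k) (H k j) n - (lam j * fX (H i j) n + q j * H i j n)).

Lemma is_formal_fundP B lam q H :
  is_formal_fund B lam q H <-> forall i j n, fund_defect B lam q H i j n = 0.
Proof.
split=> hH i j n; first by rewrite /fund_defect hH subrr.
exact: subr0_eq (hH i j n).
Qed.

End FormalSeries.

Section System.
Variables (R : realType) (nu : R[i]).
Local Notation C := R[i].
Local Notation o0 := (@Ordinal 3 0 isT).
Local Notation o1 := (@Ordinal 3 1 isT).
Local Notation o2 := (@Ordinal 3 2 isT).
Implicit Types (H : fmx C) (phi psi : fps C).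

Lemma x2A_mul0 H j n :
  \sum_(k < 3) fmul (x2A nu o0 k) (H k j) n = H o0 j n + fX (fX (H o1 j)) n.
Proof. by rewrite big_ord3 /x2A /= fmul_fconstl fmulX2l fmul0l mul1r addr0. Qed.

Lemma x2A_mul1 H j n :
  \sum_(k < 3) fmul (x2A nu o1 k) (H k j) n
  = 2 * H o1 j n + (nu - 2) * fX (H o1 j) n + fX (fX (H o2 j)) n.
Proof. by rewrite big_ord3 /x2A /= fmul0l fmul_affinel fmulX2l add0r. Qed.

Lemma x2A_mul2 H j n :
  \sum_(k < 3) fmul (x2A nu o2 k) (H k j) n = (nu - 4) * fX (H o2 j) n.
Proof.
rewrite big_ord3 /x2A /= !fmul0l !add0r.
rewrite (@eq_fmull _ _ (fun k => if k == 0%N then 0 else if k == 1%N then nu - 4 else 0)).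
  by rewrite fmul_affinel mul0r add0r.
by case=> [|[|k]].
Qed.

Local Notation defect phi psi := (fund_defect (x2A nu) (Lambda nu) (@Qd R) (Hmat phi psi)).

(* Entries (0,1) and (0,2) are x^2 resp. -x^4/2 times the coefficient form of
   phi = 1 - nu x phi - x^2 phi' resp. psi = 1 + nu x psi + x^2 psi'.  The
   value [c 0] is irrelevant (it multiplies [fX f 0 = 0]); writing [k.-1] makes
   [c i.+1] convertible to the factors of [rising]. *)
Lemma Hmat_defect01 phi psi n :
  defect phi psi o0 o1 n = fX (fX (fps_rec_defect (fun k => - (nu + k.-1%:R)) phi)) n.
Proof.
rewrite /fund_defect x2A_mul0 /Hmat /Lambda /Qd /fps_rec_defect /fderiv /fconst /=.
by case: n => [|[|[|n]]] /=; ring.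
Qed.

Lemma Hmat_defect02 phi psi n :
  defect phi psi o0 o2 n = - fX (fX (fX (fX (fps_rec_defect (fun k => nu + k.-1%:R) psi)))) n / 2.
Proof.
rewrite /fund_defect x2A_mul0 /Hmat /Lambda /Qd /fps_rec_defect /fderiv /fconst /=.
by case: n => [|[|[|[|[|n]]]]] /=; ring.
Qed.

Lemma Hmat_defect_eq0 phi psi (i j : 'I_3) n :
  (0 < i)%N || (j == 0%N :> nat) -> defect phi psi i j n = 0.
Proof.
case: i j => [[|[|[|i]]] Hi] [[|[|[|j]]] Hj] //= _;
rewrite (bool_irrelevance Hi isT) (bool_irrelevance Hj isT) /fund_defect
  ?x2A_mul0 ?x2A_mul1 ?x2A_mul2 /Hmat /Lambda /Qd /fderiv /fconst /=;
by case: n => [|[|[|[|n]]]] /=; field.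
Qed.

Lemma Hmat_fundE phi psi :
  is_formal_fund (x2A nu) (Lambda nu) (@Qd R) (Hmat phi psi) <->
  (forall n, phi n = (-1) ^+ n * rising nu n) /\ (forall n, psi n = rising nu n).
Proof.
have phiE : (forall n, fps_rec_defect (fun k => - (nu + k.-1%:R)) phi n = 0) <->
            (forall n, phi n = (-1) ^+ n * rising nu n).
  by rewrite fps_rec_defect_eq0P; split=> hphi n; rewrite hphi /rising prodrN card_ord.
have psiE : (forall n, fps_rec_defect (fun k => nu + k.-1%:R) psi n = 0) <->
            (forall n, psi n = rising nu n).
  exact: fps_rec_defect_eq0P.
rewrite is_formal_fundP -phiE -psiE; split=> [hH | [hphi hpsi] i j n].
  split; first by apply/fX_eq0/fX_eq0 => n; rewrite -(Hmat_defect01 phi psi) hH.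
  apply/fX_eq0/fX_eq0/fX_eq0/fX_eq0 => n; have /eqP := hH o0 o2 n.
  by rewrite Hmat_defect02 mulf_eq0 invr_eq0 pnatr_eq0 oppr_eq0 orbF => /eqP.
have [/Hmat_defect_eq0 //|] := boolP ((0 < i)%N || (j == 0%N :> nat)).
case: i j => [[|i] Hi] [[|[|[|j]]] Hj] //= _;
  rewrite (bool_irrelevance Hi isT) (bool_irrelevance Hj isT).
  by rewrite Hmat_defect01; case: n => [|[|n]] //=.
by rewrite Hmat_defect02; case: n => [|[|[|[|n]]]] /=; rewrite ?hpsi oppr0 mul0r.
Qed.

End System.

Section Growth.
Variable F : numFieldType.
Hypothesis archi : forall y : F, 0 <= y -> exists k : nat, y < k%:R.

Lemma doubling_unbounded (a : nat -> F) N :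
  0 < a N -> (forall n, (N <= n)%N -> 2 * a n <= a n.+1) ->
  ~ exists M, forall n, a n <= M.
Proof.
move=> aN_gt0 a_double [M aM].
have a_lin k : k.+1%:R * a N <= a (N + k)%N.
  elim: k => [|k IHk]; first by rewrite mul1r addn0.
  rewrite addnS; apply: le_trans (a_double _ (leq_addr _ _)).
  apply: le_trans (_ : 2 * (k.+1%:R * a N) <= _); last by rewrite ler_pM2l.
  by rewrite mulrA -natrM ler_pM2r // ler_nat; lia.
have [k Mk] := archi (divr_ge0 (le_trans (ltW aN_gt0) (aM N)) (ltW aN_gt0)).
rewrite ltr_pdivrMr // in Mk.
have := aM (N + k)%N; rewrite lt_geF //.
apply: (lt_le_trans Mk); apply: le_trans (a_lin k).
by rewrite ler_pM2r // ler_nat.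
Qed.

Lemma eventually_norm_addn_ge (x z c : F) : z != 0 -> 0 <= c ->
  exists N, forall n, (N <= n)%N -> c <= `|x + n%:R| * `|z|.
Proof.
move=> z_neq0 c_ge0; have z_gt0 : 0 < `|z| by rewrite normr_gt0.
have [N hN] : exists N : nat, c / `|z| + `|x| < N%:R.
  by apply: archi; rewrite addr_ge0 ?divr_ge0.
exists N => n Nn; rewrite -ler_pdivrMr // addrC.
apply: le_trans (lerB_normD _ _); rewrite lerBrDr (le_trans (ltW hN)) //.
by rewrite ger0_norm ?ler0n // ler_nat.
Qed.

End Growth.

Section Rising.
Variable R : realType.
Implicit Types (nu : R[i]) (f g : fps R[i]).

Lemma archi_complex : forall y : R[i], 0 <= y -> exists k : nat, y < k%:R.
Proof.
move=> y y_ge0; rewrite -(ger0_norm y_ge0); case: y {y_ge0} => a b.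
rewrite normc_def /=; exists (Num.Def.archi_bound (Num.sqrt (a ^+ 2 + b ^+ 2))).
by rewrite -(rmorph_nat (real_complex R)) ltcR archi_boundP ?sqrtr_ge0.
Qed.

Lemma risingS nu n : rising nu n.+1 = (nu + n%:R) * rising nu n.
Proof. by rewrite /rising big_ord_recr mulrC. Qed.

Lemma rising_recl nu n : rising nu n.+1 = nu * rising (nu + 1) n.
Proof.
rewrite /rising big_ord_recl addr0; congr (_ * _); apply: eq_bigr => i _.
by rewrite lift0 mulrS addrA.
Qed.

Lemma rising_neq0 nu n : (forall m : nat, nu != - m%:R) -> rising nu n != 0.
Proof.
by move=> nu_nat; rewrite /rising prodf_seq_neq0; apply/allP => i _ /=; rewrite addr_eq0 nu_nat.
Qed.

Lemma rising_natN_eq0 (m n : nat) : (m < n)%N -> rising (- m%:R : R[i]) n = 0.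
Proof. by move=> lt_mn; rewrite /rising (bigD1 (Ordinal lt_mn)) //= addNr mul0r. Qed.

Lemma rising_natN (m : nat) : rising (- m%:R : R[i]) m = (-1) ^+ m * m`!%:R.
Proof.
elim: m => [|m IHm]; first by rewrite /rising big_ord0 mulr1.
rewrite rising_recl (_ : - m.+1%:R + 1 = - m%:R) ?IHm ?factS ?natrM ?exprS; first by ring.
by rewrite mulrSr opprD addrNK.
Qed.

Lemma divergent_rising nu : (forall m : nat, nu != - m%:R) -> divergent (rising nu).
Proof.
move=> nu_nat z z_neq0 [M hM].
have [N hN] := eventually_norm_addn_ge archi_complex nu z_neq0 (ler0n _ 2).
apply: (doubling_unbounded archi_complex (a := fun n => `|rising nu n * z ^+ n|) (N := N)).
- by rewrite normr_gt0 mulf_neq0 ?rising_neq0 ?expf_neq0.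
- move=> n Nn; rewrite risingS exprS !normrM mulrACA -mulrA mulrA.
  by apply: ler_wpM2r; [rewrite mulr_ge0 | exact: hN].
- by exists M.
Qed.

Lemma divergent_eq_norm f g : (forall n, `|f n| = `|g n|) -> divergent g -> divergent f.
Proof.
move=> fg g_div z z_neq0 [M hM]; apply: (g_div z z_neq0); exists M => n.
by rewrite normrM -fg -normrM.
Qed.

End Rising.

Theorem mainTheorem8 (R : realType) (nu : R[i]) :
  (exists! pp : fps R[i] * fps R[i],
      is_formal_fund (x2A nu) (Lambda nu) (@Qd R) (Hmat pp.1 pp.2))
  /\
  (forall phi psi : fps R[i],
     is_formal_fund (x2A nu) (Lambda nu) (@Qd R) (Hmat phi psi) ->
     (forall n, psi n = rising nu n /\ phi n = (-1) ^+ n * rising nu n)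
     /\
     (forall m : nat, nu = - (m%:R) ->
        (forall n, (m < n)%N -> psi n = 0 /\ phi n = 0)
        /\ psi m = (-1) ^+ m * (m`!)%:R /\ phi m = (m`!)%:R)
     /\
     ((forall m : nat, nu != - (m%:R)) ->
        divergent psi /\ divergent phi)).
Proof.
split.
  exists ((fun n => (-1) ^+ n * rising nu n), rising nu); split; first exact/Hmat_fundE.
  move=> [phi psi] /Hmat_fundE [phiE psiE].
  by congr pair; apply: boolp.funext => n; rewrite ?phiE ?psiE.
move=> phi psi /Hmat_fundE [phiE psiE]; split; first by move=> n; rewrite phiE psiE.
split.
  move=> m nuE; rewrite phiE psiE nuE rising_natN signrMK; split=> // n lt_mn.
  by rewrite phiE psiE nuE rising_natN_eq0 ?mulr0.
move=> nu_nat; split; apply: divergent_eq_norm (divergent_rising nu_nat) => n.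
  by rewrite psiE.
by rewrite phiE normrM normrX normrN1 expr1n mul1r.
Qed.
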